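(* Let $X\subseteq \mathbb{P}^1\times\mathbb{P}^1\times\mathbb{P}^1$ be a Ferrers variety of lines. Then $I_X$ is minimally generated by the set of forms $$\left\{ \prod_{i\le a}A_i\prod_{j\le b}B_j\prod_{k\le c}C_k \ :\ (a,b,c)\in \hat{D}(X) \right\}.$$
   Context: $R=K[x_{1,0},x_{1,1},x_{2,0},x_{2,1},x_{3,0},x_{3,1}]$ ($K$ algebraically closed, characteristic zero) trigraded by $\deg x_{i,j}=\mathbf e_i$, coordinate ring of $\mathbb{P}^1\times\mathbb{P}^1\times\mathbb{P}^1$. A variety of lines is $X= \bigcup_{(i,j)\in U_3(X)} \mathcal{L}(A_i,B_j)\cup\bigcup_{(i,k)\in U_2(X)} \mathcal{L}(A_i,C_k)\cup \bigcup_{(j,k)\in U_1(X)} \mathcal{L}(B_j,C_k)$, where $A_1,\ldots,A_{d_1}$, $B_1,\ldots,B_{d_2}$, $C_1,\ldots,C_{d_3}$ are linear forms of degrees $(1,0,0),(0,1,0),(0,0,1)$ defining the distinct hyperplanes containing some line of $X$, $\mathcal L(F,G)$ is the line defined by the ideal $(F,G)$, and $U_3(X)\subseteq[d_1]\times[d_2]$, $U_2(X)\subseteq[d_1]\times[d_3]$, $U_1(X)\subseteq[d_2]\times[d_3]$ with $[n]=\{1,\ldots,n\}$. Its ideal is $I_X=\bigcap_{U_3(X)} (A_i,B_j)\cap\bigcap_{U_2(X)} (A_i,C_k)\cap\bigcap_{U_1(X)} (B_j,C_k)$. $X$ is a Ferrers variety of lines if, for this labeling, each of $U_1(X),U_2(X),U_3(X)$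 is downward closed: $(u,v)\in U_h(X)\Rightarrow (u',v')\in U_h(X)$ for all $1\le u'\le u$, $1\le v'\le v$. Let $X_3,X_2,X_1$ be the unions of the lines of $X$ indexed by $U_3(X),U_2(X),U_1(X)$ respectively. Let $D_3(X)$ be the set of tridegrees (all of the form $(a,b,0)$) of a minimal homogeneous generating set of $I_{X_3}$, $D_2(X)$ the set of tridegrees (of the form $(a,0,c)$) of minimal generators of $I_{X_2}$, and $D_1(X)$ the set of tridegrees (of the form $(0,b,c)$) of minimal generators of $I_{X_1}$. Set $D(X)=\{(\max\{a_3,a_2\},\max\{b_3,b_1\},\max\{c_1,c_2\}) : (a_3,b_3,0)\in D_3(X),(a_2,0,c_2)\in D_2(X),(0,b_1,c_1)\in D_1(X)\}$ and let $\hat D(X)$ be the set of minimal elements of $D(X)$ with respect to the componentwise partial order on $\mathbb N^3$. *)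

From HB Require Import structures.
From mathcomp Require Import all_boot all_order all_algebra.
From mathcomp Require Import mpoly.
Set Implicit Arguments. Unset Strict Implicit. Unset Printing Implicit Defensive.
Import GRing.Theory.
Local Open Scope ring_scope.

(* The ring R = K[x_{1,0},x_{1,1},x_{2,0},x_{2,1},x_{3,0},x_{3,1}]:
   variable 'X_0 = x_{1,0}, 'X_1 = x_{1,1}, 'X_2 = x_{2,0}, 'X_3 = x_{2,1},
   'X_4 = x_{3,0}, 'X_5 = x_{3,1}. *)
Notation R6 K := {mpoly K[6]}.

Definition i0 : 'I_6 := @Ordinal 6 0 isT.
Definition i1 : 'I_6 := @Ordinal 6 1 isT.
Definition i2 : 'I_6 := @Ordinal 6 2 isT.
Definition i3 : 'I_6 := @Ordinal 6 3 isT.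
Definition i4 : 'I_6 := @Ordinal 6 4 isT.
Definition i5 : 'I_6 := @Ordinal 6 5 isT.

Definition tdeg (m : 'X_{1..6}) : nat * nat * nat :=
  ((m i0 + m i1)%N, (m i2 + m i3)%N, (m i4 + m i5)%N).

(* p is trihomogeneous of tridegree d (0 is homogeneous of every tridegree) *)
Definition thomog (K : nzRingType) (p : R6 K) (d : nat * nat * nat) : Prop :=
  forall m, m \in msupp p -> tdeg m = d.

Definition ideal_gen (K : comNzRingType) (S : R6 K -> Prop) (p : R6 K) : Prop :=
  exists l : seq (R6 K * R6 K),
    (forall pr, pr \in l -> S pr.2) /\ p = \sum_(pr <- l) pr.1 * pr.2.

Definition generates (K : comNzRingType) (S I : R6 K -> Prop) : Prop :=
  forall p, I p <-> ideal_gen S p.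

Definition min_generates (K : comNzRingType) (S I : R6 K -> Prop) : Prop :=
  generates S I /\ forall s, S s -> ~ ideal_gen (fun q => S q /\ q <> s) s.

Definition min_hom_generates (K : comNzRingType) (S I : R6 K -> Prop) : Prop :=
  min_generates S I /\ forall s, S s -> exists d, thomog s d.

Definition line_ideal (K : comNzRingType) (F G : R6 K) : R6 K -> Prop :=
  ideal_gen (fun q => q = F \/ q = G).

(* I_{X_3}, I_{X_2}, I_{X_1}, I_X  (empty intersection = whole ring) *)
Definition I_X3 (K : comNzRingType) (A B : nat -> R6 K) (U3 : nat -> nat -> Prop)
  (p : R6 K) : Prop := forall i j, U3 i j -> line_ideal (A i) (B j) p.
Definition I_X2 (K : comNzRingType) (A C : nat -> R6 K) (U2 : nat -> nat -> Prop)
  (p : R6 K) : Prop := forall i k, U2 i k -> line_ideal (A i) (C k) p.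
Definition I_X1 (K : comNzRingType) (B C : nat -> R6 K) (U1 : nat -> nat -> Prop)
  (p : R6 K) : Prop := forall j k, U1 j k -> line_ideal (B j) (C k) p.
Definition I_X (K : comNzRingType) (A B C : nat -> R6 K)
  (U3 U2 U1 : nat -> nat -> Prop) (p : R6 K) : Prop :=
  I_X3 A B U3 p /\ I_X2 A C U2 p /\ I_X1 B C U1 p.

Definition Dset (K : comNzRingType) (I : R6 K -> Prop) (d : nat * nat * nat) : Prop :=
  exists G, min_hom_generates G I /\ exists g, G g /\ g != 0 /\ thomog g d.

Definition DX (K : comNzRingType) (A B C : nat -> R6 K) (U3 U2 U1 : nat -> nat -> Prop)
  (d : nat * nat * nat) : Prop :=
  exists a3 b3 a2 c2 b1 c1,
    Dset (I_X3 A B U3) (a3, b3, 0%N) /\ Dset (I_X2 A C U2) (a2, 0%N, c2) /\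
    Dset (I_X1 B C U1) (0%N, b1, c1) /\
    d = (maxn a3 a2, maxn b3 b1, maxn c1 c2).

Definition le3 (d e : nat * nat * nat) : Prop :=
  (d.1.1 <= e.1.1)%N /\ (d.1.2 <= e.1.2)%N /\ (d.2 <= e.2)%N.

Definition DhatX (K : comNzRingType) (A B C : nat -> R6 K) (U3 U2 U1 : nat -> nat -> Prop)
  (d : nat * nat * nat) : Prop :=
  DX A B C U3 U2 U1 d /\ forall e, DX A B C U3 U2 U1 e -> le3 e d -> e = d.

Definition ferrers (U : nat -> nat -> Prop) (n1 n2 : nat) : Prop :=
  (forall u v, U u v -> (1 <= u <= n1)%N /\ (1 <= v <= n2)%N) /\
  (forall u v u' v', U u v -> (1 <= u' <= u)%N -> (1 <= v' <= v)%N -> U u' v').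

Definition distinct_forms (K : comNzRingType) (L : nat -> R6 K) (n : nat)
  (d : nat * nat * nat) : Prop :=
  (forall i, (1 <= i <= n)%N -> L i != 0 /\ thomog (L i) d) /\
  (forall i j, (1 <= i <= n)%N -> (1 <= j <= n)%N -> i <> j ->
     ~ exists c : K, L i = c *: L j).

(* The product A_1...A_a B_1...B_b C_1...C_c vanishes on X exactly when (a+1, b+1), (a+1, c+1)
   and (b+1, c+1) lie outside U3, U2 and U1, and these products generate I_X.  To see this,
   eliminate a variable using A_1 = 0: a form p of I_X becomes p = r + A_1 q.  The remainder r is
   divisible by the B_j and C_k of the first rows of U3 and U2, and the cofactor lies in the ideal
   of the remaining lines between B's and C's, which is the same problem with two families; the
   quotient q lies in the ideal of X with A_1 removed.  All cancellations rest on the ideals (L)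
   and (L, M) of independent linear forms being prime.  Taking tridegree components shows that
   the products of minimal tridegree form a minimal generating set, and that every minimal
   homogeneous generating set has the same tridegrees; comparing the minimal tridegrees of X and
   of X_3, X_2, X_1 identifies them with \hat D(X). *)

From HB Require Import structures.
From mathcomp Require Import all_boot all_order all_algebra.
From mathcomp Require Import mpoly.
From mathcomp Require Import ring zify.
From Stdlib Require Import Classical.
Import GRing.Theory.
Local Open Scope ring_scope.
Set Implicit Arguments. Unset Strict Implicit.

Section IdealGen.
Variable K : comNzRingType.
Local Notation R := {mpoly K[6]}.
Implicit Types (S : R -> Prop) (p q r : R).

Lemma ideal_gen0 S : ideal_gen S 0.
Proof. by exists [::]; rewrite big_nil. Qed.

Lemma mem_ideal_gen S s : S s -> ideal_gen S s.
Proof.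
by move=> Ss; exists [:: (1, s)]; rewrite big_seq1 mul1r; split=> // pr /[!inE] /eqP ->.
Qed.

Lemma ideal_genD S p q : ideal_gen S p -> ideal_gen S q -> ideal_gen S (p + q).
Proof.
move=> [l1 [h1 ->]] [l2 [h2 ->]]; exists (l1 ++ l2); rewrite big_cat; split=> // pr.
by rewrite mem_cat => /orP[]; [exact: h1 | exact: h2].
Qed.

Lemma ideal_genMl S r p : ideal_gen S p -> ideal_gen S (r * p).
Proof.
move=> [l [hl ->]]; exists [seq (r * pr.1, pr.2) | pr <- l]; split.
  by move=> _ /mapP[pr /hl Spr ->].
by rewrite big_map mulr_sumr; apply: eq_bigr => pr _; rewrite mulrA.
Qed.

Lemma ideal_genMr S r p : ideal_gen S p -> ideal_gen S (p * r).
Proof. by rewrite mulrC; exact: ideal_genMl. Qed.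

Lemma ideal_genB S p q : ideal_gen S p -> ideal_gen S q -> ideal_gen S (p - q).
Proof. by move=> Sp Sq; rewrite -mulN1r; apply: ideal_genD => //; exact: ideal_genMl. Qed.

Lemma ideal_gen_sum S (I : eqType) (s : seq I) (F : I -> R) :
  (forall i, i \in s -> ideal_gen S (F i)) -> ideal_gen S (\sum_(i <- s) F i).
Proof.
elim: s => [|i s IH] hF; first by rewrite big_nil; exact: ideal_gen0.
rewrite big_cons; apply: ideal_genD; first by apply: hF; rewrite mem_head.
by apply: IH => j js; apply: hF; rewrite inE js orbT.
Qed.

Lemma ideal_gen_trans S S' p :
  (forall s, S s -> ideal_gen S' s) -> ideal_gen S p -> ideal_gen S' p.
Proof.
move=> hS [l [hl ->]]; apply: ideal_gen_sum => pr /hl Spr.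
exact/ideal_genMl/hS.
Qed.

Lemma ideal_gen_mono S S' p :
  (forall s, S s -> S' s) -> ideal_gen S p -> ideal_gen S' p.
Proof. by move=> hS; apply: ideal_gen_trans => s /hS /mem_ideal_gen. Qed.

Lemma ideal_gen_mulr S S' f p : (forall s, S s -> ideal_gen S' (s * f)) ->
  ideal_gen S p -> ideal_gen S' (p * f).
Proof.
move=> hS [l [hl ->]]; rewrite mulr_suml; apply: ideal_gen_sum => pr /hl Spr.
by rewrite -mulrA; exact/ideal_genMl/hS.
Qed.

Lemma ideal_gen_eq0 S p : (forall s, S s -> s = 0) -> ideal_gen S p -> p = 0.
Proof.
by move=> hS [l [hl ->]]; apply: big1_seq => pr /andP[_ /hl /hS ->]; rewrite mulr0.
Qed.

Lemma ideal_gen_congM S a b c d : ideal_gen S (a - b) -> ideal_gen S (c - d) ->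
  ideal_gen S (a * c - b * d).
Proof.
have -> : a * c - b * d = (a - b) * c + b * (c - d) by ring.
by move=> hab hcd; apply: ideal_genD; [exact: ideal_genMr | exact: ideal_genMl].
Qed.

Lemma ideal_gen_congX S a b n : ideal_gen S (a - b) -> ideal_gen S (a ^+ n - b ^+ n).
Proof.
move=> hab; elim: n => [|n IH]; first by rewrite !expr0 subrr; exact: ideal_gen0.
by rewrite !exprS; exact: ideal_gen_congM.
Qed.

Lemma line_idealP F G p : line_ideal F G p <-> exists u v, p = u * F + v * G.
Proof.
split=> [[l [hl ->]]|[u [v ->]]]; last first.
  by apply: ideal_genD; apply/ideal_genMl/mem_ideal_gen; [left | right].
elim: l hl => [|pr l IH] hl; first by exists 0, 0; rewrite big_nil !mul0r addr0.
rewrite big_cons; have [|u [v ->]] := IH.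
  by move=> pr' l_pr'; apply: hl; rewrite inE l_pr' orbT.
case: (hl pr (mem_head _ _)) => ->.
  by exists (pr.1 + u), v; ring.
by exists u, (pr.1 + v); ring.
Qed.

Lemma line_idealC F G p : line_ideal F G p -> line_ideal G F p.
Proof. by apply: ideal_gen_mono => s []; [right | left]. Qed.

Definition divides (D : R) : R -> Prop := ideal_gen (fun q => q = D).

Lemma dividesP D p : divides D p <-> exists q, p = q * D.
Proof.
split=> [hp|[q ->]]; last exact/ideal_genMl/mem_ideal_gen.
have /line_idealP[u [v ->]] : line_ideal D D p by apply: ideal_gen_mono hp => s ->; left.
by exists (u + v); rewrite mulrDl.
Qed.

Lemma divides_line_ideal F G p : divides G p -> line_ideal F G p.
Proof. by apply: ideal_gen_mono => s ->; right. Qed.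

End IdealGen.

Section Substitution.
Variable K : fieldType.
Local Notation R := {mpoly K[6]}.
Implicit Types (p q D L M N : R) (σ : 6.-tuple R).

Lemma mpolyXU_neq0 (i : 'I_6) : ('X_i : R) != 0.
Proof.
apply/eqP => Xi0; have := @mcoeffXU 6 K i i.
by rewrite Xi0 mcoeff0 eqxx => /esym/eqP; rewrite oner_eq0.
Qed.

Lemma comp_mpoly_congr D σ : (forall i : 'I_6, divides D ('X_i - comp_mpoly σ 'X_i)) ->
  forall p, divides D (p - comp_mpoly σ p).
Proof.
move=> hX; elim/mpolyind => [|c m p _ _ IH].
  by rewrite raddf0 subr0; exact: ideal_gen0.
rewrite raddfD /= comp_mpolyZ opprD addrACA -scalerBr -mul_mpolyC.
apply: ideal_genD => //; apply: ideal_genMl.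
rewrite comp_mpolyX mpolyXE_id.
apply: (big_ind2 (fun x y => divides D (x - y))) => [|x y x' y'|i _].
- by rewrite subrr; exact: ideal_gen0.
- exact: ideal_gen_congM.
- by apply: ideal_gen_congX; have := hX i; rewrite comp_mpolyXU -tnth_nth.
Qed.

Definition lin_form (v w : 'I_6) L := L != 0 /\ exists a b : K, L = a *: 'X_v + b *: 'X_w.

Lemma lin_formC v w L : lin_form v w L -> lin_form w v L.
Proof. by move=> [nzL [a [b LE]]]; split=> //; exists b, a; rewrite LE addrC. Qed.

Lemma comp_lin_form_id σ u u' N : comp_mpoly σ 'X_u = 'X_u -> comp_mpoly σ 'X_u' = 'X_u' ->
  lin_form u u' N -> comp_mpoly σ N = N.
Proof. by move=> σu σu' [_ [a [b ->]]]; rewrite raddfD /= !comp_mpolyZ σu σu'. Qed.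

Definition subst1 (v : 'I_6) (t : R) : 6.-tuple R :=
  [tuple if i == v then t else 'X_i | i < 6].

Lemma comp_subst1X v t i : comp_mpoly (subst1 v t) 'X_i = if i == v then t else 'X_i.
Proof. by rewrite comp_mpolyXU -tnth_nth tnth_mktuple. Qed.

(* Substituting [σ] is then reduction modulo the principal ideal [(M)]. *)
Definition kills σ M := comp_mpoly σ M = 0 /\ forall p, divides M (p - comp_mpoly σ p).

Lemma kills_dividesE σ M p : kills σ M -> divides M p <-> comp_mpoly σ p = 0.
Proof.
move=> [σM σ_congr]; split=> [/dividesP[q ->]|σp0]; first by rewrite rmorphM /= σM mulr0.
by rewrite -[p]subr0 -σp0; exact: σ_congr.
Qed.

Lemma comp_line_ideal σ M N p : comp_mpoly σ M = M -> comp_mpoly σ N = N ->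
  line_ideal M N p -> line_ideal M N (comp_mpoly σ p).
Proof.
move=> σM σN /line_idealP[a [b ->]]; apply/line_idealP.
by exists (comp_mpoly σ a), (comp_mpoly σ b); rewrite rmorphD !rmorphM /= σM σN.
Qed.

Lemma kills_line_ideal σ M N p : kills σ M -> comp_mpoly σ N = N ->
  line_ideal M N p -> divides N (comp_mpoly σ p).
Proof.
move=> [σM _] σN /line_idealP[a [b ->]]; apply/dividesP; exists (comp_mpoly σ b).
by rewrite rmorphD !rmorphM /= σM σN mulr0 add0r.
Qed.

Lemma subst1_kills v w a b (σ := subst1 v (- (b / a) *: 'X_w)) : v != w -> a != 0 ->
  [/\ kills σ (a *: 'X_v + b *: 'X_w), forall u, u != v -> comp_mpoly σ 'X_u = 'X_u &
    forall N, lin_form v w N -> comp_mpoly σ N = 0 -> exists c, N = c *: (a *: 'X_v + b *: 'X_w)].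
Proof.
move=> vw a0; have σX := comp_subst1X v (- (b / a) *: 'X_w).
have σw : comp_mpoly σ 'X_w = 'X_w by rewrite σX eq_sym (negbTE vw).
have σN g h : comp_mpoly σ (g *: 'X_v + h *: 'X_w) = (g * - (b / a) + h) *: 'X_w.
  by rewrite raddfD /= !comp_mpolyZ σw σX eqxx scalerA scalerDl.
split; [split| |].
- by rewrite σN mulrN mulrCA divff // mulr1 addNr scale0r.
- move=> p; apply: comp_mpoly_congr => i; rewrite σX.
  case: eqP => [->|_]; last by rewrite subrr; exact: ideal_gen0.
  apply/dividesP; exists a^-1%:MP; rewrite mul_mpolyC scalerDr !scalerA mulVf //.
  by rewrite scale1r scaleNr opprK mulrC.
- by move=> u uv; rewrite σX (negbTE uv).
- move=> N [_ [g [h ->]]]; rewrite σN => /eqP.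
  rewrite scaler_eq0 (negbTE (mpolyXU_neq0 _)) orbF addrC addr_eq0 => /eqP ->.
  exists (g / a); rewrite scalerDr !scalerA divfK //; congr (_ + _ *: _).
  by rewrite mulrN opprK mulrA mulrAC.
Qed.

Lemma lin_form_killer v w M : v != w -> lin_form v w M ->
  exists σ, [/\ kills σ M, forall u, u \notin [:: v; w] -> comp_mpoly σ 'X_u = 'X_u &
    forall N, lin_form v w N -> comp_mpoly σ N = 0 -> exists c, N = c *: M].
Proof.
move=> vw [nzM [a [b ME]]]; rewrite {}ME in nzM *; have [a0|a0] := eqVneq a 0; last first.
  have [kσ σu σN] := subst1_kills b vw a0; eexists; split; [exact: kσ | move=> u | exact: σN].
  by rewrite !inE negb_or => /andP[uv _]; exact: σu.
rewrite eq_sym in vw.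
have b0 : b != 0 by apply: contraNneq nzM => b0; rewrite a0 b0 !scale0r addr0.
have [kσ σu σN] := subst1_kills a vw b0.
rewrite addrC; eexists; split; [exact: kσ | move=> u | move=> N /lin_formC; exact: σN].
by rewrite !inE negb_or => /andP[_ uw]; exact: σu.
Qed.

End Substitution.

Section LinearPrimes.
Variable K : fieldType.
Local Notation R := {mpoly K[6]}.
Implicit Types (p f L N : R).

Section Principal.
Variables (v w : 'I_6) (M : R).
Hypotheses (vw : v != w) (linM : lin_form v w M).

Lemma divides_lin_prime L f : divides M (L * f) -> divides M L \/ divides M f.
Proof.
have [σ [kσ _ _]] := lin_form_killer vw linM.
rewrite !(kills_dividesE _ kσ) rmorphM /= => /eqP; rewrite mulf_eq0.
by case/orP=> /eqP; [left | right].
Qed.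

Lemma divides_lin_form N : lin_form v w N -> divides M N -> exists c, N = c *: M.
Proof.
have [σ [kσ _ σN]] := lin_form_killer vw linM.
by move=> linN /(kills_dividesE _ kσ); exact: σN.
Qed.

Lemma not_divides_disjoint u u' N : u \notin [:: v; w] -> u' \notin [:: v; w] ->
  lin_form u u' N -> ~ divides M N.
Proof.
have [σ [kσ σu _]] := lin_form_killer vw linM.
move=> uvw u'vw linN /(kills_dividesE _ kσ).
by rewrite (comp_lin_form_id (σu _ uvw) (σu _ u'vw) linN); apply/eqP; case: linN.
Qed.

End Principal.

Section Line.
Variables (v w v' w' : 'I_6) (M1 M2 : R).
Hypotheses (vw_uniq : uniq [:: v; w; v'; w']).
Hypotheses (linM1 : lin_form v w M1) (linM2 : lin_form v' w' M2).

(* Killing [M2] and then [M1] identifies [(M1, M2)] with the kernel of a ring morphism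
   into a domain. *)
Lemma line_ideal_killer : exists σ1 σ2 : 6.-tuple R,
  [/\ forall p, line_ideal M1 M2 p <-> comp_mpoly σ1 (comp_mpoly σ2 p) = 0,
      forall N, lin_form v w N -> comp_mpoly σ1 (comp_mpoly σ2 N) = 0 ->
        exists c, N = c *: M1 &
      forall u, u \notin [:: v; w; v'; w'] -> comp_mpoly σ1 (comp_mpoly σ2 'X_u) = 'X_u].
Proof.
move: vw_uniq => /= /and4P[]; rewrite !inE !negb_or => /and3P[vw vv' vw'] /andP[wv' ww'] v'w' _.
have [σ1 [[σ1M1 σ1_congr] σ1u σ1N]] := lin_form_killer vw linM1.
have [σ2 [[σ2M2 σ2_congr] σ2u _]] := lin_form_killer v'w' linM2.
have σ2_lin N : lin_form v w N -> comp_mpoly σ2 N = N.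
  by apply: comp_lin_form_id; apply: σ2u; rewrite !inE negb_or ?vv' ?vw' ?wv' ?ww'.
exists σ1, σ2; split.
- move=> p; split=> [/line_idealP[a [b ->]]|σp0].
    by rewrite !rmorphD !rmorphM /= σ2M2 (σ2_lin _ linM1) σ1M1 rmorph0 !mulr0 addr0.
  have /dividesP[b e2] := σ2_congr p.
  have /dividesP[a e1] := σ1_congr (comp_mpoly σ2 p); rewrite σp0 subr0 in e1.
  by apply/line_idealP; exists a, b; rewrite -e1 -e2 addrC subrK.
- by move=> N linN; rewrite σ2_lin //; exact: σ1N.
- move=> u; rewrite !inE !negb_or => /and4P[uv uw uv' uw'].
  by rewrite σ2u ?σ1u // !inE negb_or ?uv ?uw ?uv' ?uw'.
Qed.

Lemma line_ideal_prime L f :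
  line_ideal M1 M2 (L * f) -> line_ideal M1 M2 L \/ line_ideal M1 M2 f.
Proof.
have [σ1 [σ2 [σE _ _]]] := line_ideal_killer.
rewrite !σE !rmorphM /= => /eqP; rewrite mulf_eq0.
by case/orP=> /eqP; [left | right].
Qed.

Lemma line_ideal_cancel q N :
  ~ line_ideal M1 M2 N -> line_ideal M1 M2 (q * N) -> line_ideal M1 M2 q.
Proof. by move=> nN; rewrite mulrC => /line_ideal_prime[]. Qed.

Lemma line_ideal_lin_form N : lin_form v w N -> line_ideal M1 M2 N -> exists c, N = c *: M1.
Proof.
have [σ1 [σ2 [σE σN _]]] := line_ideal_killer.
by move=> linN /σE; exact: σN.
Qed.

Lemma not_line_ideal_disjoint u u' N : u \notin [:: v; w; v'; w'] ->
  u' \notin [:: v; w; v'; w'] -> lin_form u u' N -> ~ line_ideal M1 M2 N.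
Proof.
have [σ1 [σ2 [σE _ σu]]] := line_ideal_killer.
move=> uvw u'vw [nzN [a [b NE]]] /σE; rewrite NE !raddfD /= !comp_mpolyZ σu // σu // -NE.
exact/eqP.
Qed.

End Line.

End LinearPrimes.

Section PrefixProducts.
Variable K : comNzRingType.
Local Notation R := {mpoly K[6]}.
Implicit Types (F : nat -> R) (f : R).

Definition prefix_prod F a : R := \prod_(1 <= i < a.+1) F i.

Lemma prefix_prod0 F : prefix_prod F 0 = 1.
Proof. by rewrite /prefix_prod big_geq. Qed.

Lemma prefix_prodSr F a : prefix_prod F a.+1 = prefix_prod F a * F a.+1.
Proof. by rewrite /prefix_prod big_nat_recr. Qed.

Lemma prefix_prodD F a b :
  prefix_prod F (a + b) = prefix_prod F a * prefix_prod (fun i => F (i + a)%N) b.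
Proof.
rewrite /prefix_prod (@big_cat_nat _ _ _ a.+1) //= ?ltnS ?leq_addr //.
by rewrite -[a.+1]add1n big_addn -addnS addKn.
Qed.

Lemma prefix_prodS F a : prefix_prod F a.+1 = F 1%N * prefix_prod (fun i => F (i + 1)%N) a.
Proof. by rewrite -[a.+1]add1n prefix_prodD /prefix_prod big_nat1. Qed.

Lemma divides_prefix_prod F a i : (0 < i <= a)%N -> divides (F i) (prefix_prod F a).
Proof.
case/andP=> i0 ia; rewrite -(subnKC ia) prefix_prodD; case: i i0 {ia} => // i _.
by rewrite prefix_prodSr mulrAC; exact/ideal_genMl/mem_ideal_gen.
Qed.

Lemma prefix_prod_le F a b : (a <= b)%N -> exists t, prefix_prod F b = prefix_prod F a * t.
Proof. by move=> ab; rewrite -(subnKC ab) prefix_prodD; eexists. Qed.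

Lemma prime_cancel_prefix_prod (P : R -> Prop) F a f :
  (forall x y, P (x * y) -> P x \/ P y) -> (forall i, (0 < i <= a)%N -> ~ P (F i)) ->
  P (prefix_prod F a * f) -> P f.
Proof.
move=> P_prime; elim: a f => [|a IH] f hF; first by rewrite prefix_prod0 mul1r.
rewrite prefix_prodSr -mulrA => /IH PFf.
have /P_prime[PF|//] : P (F a.+1 * f).
  by apply: PFf => i /andP[i0 ia]; apply: hF; rewrite i0 ltnW.
by have := hF a.+1; rewrite leqnn => /(_ isT).
Qed.

End PrefixProducts.

Section LinearFamilies.
Variable K : fieldType.
Local Notation R := {mpoly K[6]}.
Implicit Types (L : nat -> R) (r : R).

Definition lin_family (v w : 'I_6) L n := forall i, (0 < i <= n)%N -> lin_form v w (L i).

Lemma distinct_forms_shift L n d s : distinct_forms L n d -> (s <= n)%N ->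
  distinct_forms (fun i => L (i + s)%N) (n - s) d.
Proof. by move=> [hL hLL] sn; split=> [i hi|i j hi hj ij]; [apply: hL | apply: hLL]; lia. Qed.

Lemma prefix_prod_neq0 L n d a : distinct_forms L n d -> (a <= n)%N -> prefix_prod L a != 0.
Proof.
move=> [hL _] an; rewrite /prefix_prod big_nat_cond.
apply: (big_ind (fun x => x != 0)) => [|x y|i]; [exact: oner_neq0 | exact: mulf_neq0|].
by rewrite andbT ltnS => hi; apply: (hL i _).1; lia.
Qed.

Lemma distinct_forms_homog (L : nat -> R) n d a : distinct_forms L n d -> (a <= n)%N ->
  forall i, (0 < i <= a)%N -> thomog (L i) d.
Proof. by move=> [hL _] an i hi; apply: (hL i _).2; lia. Qed.

Lemma prefix_prod_divides v w L n d a r : v != w -> distinct_forms L n d ->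
  lin_family v w L n -> (a <= n)%N -> (forall i, (0 < i <= a)%N -> divides (L i) r) ->
  divides (prefix_prod L a) r.
Proof.
move=> vw [_ hLL] linL; elim: a r => [|a IH] r an hLr.
  by apply/dividesP; exists r; rewrite prefix_prod0 mulr1.
have /dividesP[s rE] : divides (prefix_prod L a) r.
  by apply: IH => [|i hi]; [lia | apply: hLr; lia].
have La : (0 < a.+1 <= n)%N by rewrite an.
have nLi i : (0 < i <= a)%N -> ~ divides (L a.+1) (L i).
  move=> hi /(divides_lin_form vw (linL _ La)) [|c Lic]; first by apply: linL; lia.
  by apply: (hLL i a.+1) => [|||]; [lia | lia | lia | exists c].
have : divides (L a.+1) (prefix_prod L a * s).
  by rewrite mulrC -rE; apply: hLr; rewrite leqnn.
move/(prime_cancel_prefix_prod (divides_lin_prime vw (linL _ La)) nLi).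
by move=> /dividesP[t sE]; apply/dividesP; exists t; rewrite rE sE prefix_prodSr; ring.
Qed.

Lemma distinct_not_line_ideal v w v' w' L n d M i j : uniq [:: v; w; v'; w'] ->
  distinct_forms L n d -> lin_family v w L n -> lin_form v' w' M ->
  (0 < i <= n)%N -> (0 < j <= n)%N -> i <> j -> ~ line_ideal (L i) M (L j).
Proof.
move=> vw_uniq [_ hLL] linL linM hi hj ij.
case/(line_ideal_lin_form vw_uniq (linL _ hi) linM (linL _ hj)) => c Lj.
by apply: (hLL j i hj hi) => [|]; [exact: nesym | exists c].
Qed.

Lemma ord6_ind (P : 'I_6 -> Prop) :
  P i0 -> P i1 -> P i2 -> P i3 -> P i4 -> P i5 -> forall i, P i.
Proof.
by move=> ? ? ? ? ? ? [[|[|[|[|[|[|//]]]]]] hi]; rewrite (bool_irrelevance hi isT).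
Qed.

Lemma mnm_unit2 (v w : 'I_6) (m : 'X_{1..6}) : v != w -> (m v + m w = 1)%N ->
  (forall i, i \notin [:: v; w] -> m i = 0%N) -> m = U_(v)%MM \/ m = U_(w)%MM.
Proof.
move=> vw mvw m0; have [[mv mw]|[mv mw]] : (m v = 1 /\ m w = 0 \/ m v = 0 /\ m w = 1)%N by lia.
- left; apply/mnmP => i; rewrite mnm1E; have [<-|vi] := eqVneq v i; first by rewrite mv.
  have [<-|wi] := eqVneq w i; first by rewrite mw.
  by rewrite m0 // !inE !(eq_sym i) (negbTE vi) (negbTE wi).
- right; apply/mnmP => i; rewrite mnm1E; have [<-|wi] := eqVneq w i; first by rewrite mw.
  have [<-|vi] := eqVneq v i; first by rewrite mv.
  by rewrite m0 // !inE !(eq_sym i) (negbTE vi) (negbTE wi).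
Qed.

Lemma lin_form_of_msupp (v w : 'I_6) (L : R) : v != w -> L != 0 ->
  (forall m, m \in msupp L -> m = U_(v)%MM \/ m = U_(w)%MM) -> lin_form v w L.
Proof.
move=> vw nzL hL; split=> //; exists L@_U_(v)%MM, L@_U_(w)%MM; apply/mpolyP => k.
rewrite mcoeffD !mcoeffZ !mcoeffX.
have Uvw : (U_(v)%MM == U_(w)%MM :> 'X_{1..6}) = false by rewrite eq_mnm1 (negbTE vw).
have [<-|vk] := eqVneq U_(v)%MM k; first by rewrite eq_sym Uvw mulr1 mulr0 addr0.
have [<-|wk] := eqVneq U_(w)%MM k; first by rewrite mulr1 mulr0 add0r.
rewrite !mulr0 addr0 memN_msupp_eq0 //.
by apply/negP => /hL[] kE; [move: vk | move: wk]; rewrite kE eqxx.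
Qed.

Lemma distinct_forms_lin1 L n : distinct_forms L n (1, 0, 0)%N -> lin_family i0 i1 L n.
Proof.
move=> [hL _] i /hL[nzL hLi]; apply: lin_form_of_msupp => // m /hLi[m01 m23 m45].
by apply: mnm_unit2 => //; elim/ord6_ind => //= _; lia.
Qed.

Lemma distinct_forms_lin2 L n : distinct_forms L n (0, 1, 0)%N -> lin_family i2 i3 L n.
Proof.
move=> [hL _] i /hL[nzL hLi]; apply: lin_form_of_msupp => // m /hLi[m01 m23 m45].
by apply: mnm_unit2 => //; elim/ord6_ind => //= _; lia.
Qed.

Lemma distinct_forms_lin3 L n : distinct_forms L n (0, 0, 1)%N -> lin_family i4 i5 L n.
Proof.
move=> [hL _] i /hL[nzL hLi]; apply: lin_form_of_msupp => // m /hLi[m01 m23 m45].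
by apply: mnm_unit2 => //; elim/ord6_ind => //= _; lia.
Qed.

End LinearFamilies.

Section Ferrers.
Implicit Types (U : nat -> nat -> Prop).

Definition rel_shift U s t u v := [/\ (0 < u)%N, (0 < v)%N & U (u + s)%N (v + t)%N].

Definition rel0 : nat -> nat -> Prop := fun _ _ => False.

Lemma ferrers0 n1 n2 : ferrers rel0 n1 n2.
Proof. by []. Qed.

Lemma ferrers_shift U n1 n2 s t : ferrers U n1 n2 -> ferrers (rel_shift U s t) (n1 - s) (n2 - t).
Proof.
move=> [box down]; split=> [u v [u0 v0 /box]|u v u' v' [u0 v0 /down Uuv] hu' hv']; first lia.
by split; [lia | lia | apply: Uuv; lia].
Qed.

Lemma ferrers_row U n1 n2 i : ferrers U n1 n2 ->
  exists l, (l <= n2)%N /\ forall j, (0 < j)%N -> U i j <-> (j <= l)%N.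
Proof.
move=> [box down].
have row m : (m <= n2)%N ->
    exists l, (l <= m)%N /\ forall j, (0 < j <= m)%N -> U i j <-> (j <= l)%N.
  elim: m => [|m IH] mn; first by exists 0%N; split=> // j; lia.
  have [l [lm hl]] := IH (ltnW mn).
  case: (classic (U i m.+1)) => Uim.
    exists m.+1; split=> // j hj; split=> _; first lia.
    by have [hi _] := box _ _ Uim; apply: down Uim _ _; lia.
  exists l; split=> [|j hj]; first lia.
  case: (ltnP j m.+1) => jm; first by apply: hl; lia.
  have -> : j = m.+1 by lia.
  by split=> // ?; lia.
have [l [ln hl]] := row n2 (leqnn _); exists l; split=> // j j0.
case: (leqP j n2) => jn; first by apply: hl; lia.
by split=> [/box|]; lia.
Qed.

Lemma ferrers_not_le U n1 n2 u v u' v' : ferrers U n1 n2 -> ~ U u.+1 v.+1 ->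
  (u <= u')%N -> (v <= v')%N -> ~ U u'.+1 v'.+1.
Proof. by move=> [_ down] nU uu' vv' /down Uuv; apply: nU; apply: Uuv; lia. Qed.

End Ferrers.

Section ProductIdeal.
Variable K : comNzRingType.
Local Notation R := {mpoly K[6]}.
Implicit Types (A B C : nat -> R) (e : nat * nat * nat).

Definition vanishing_deg (U3 U2 U1 : nat -> nat -> Prop) e :=
  [/\ ~ U3 e.1.1.+1 e.1.2.+1, ~ U2 e.1.1.+1 e.2.+1 & ~ U1 e.1.2.+1 e.2.+1].

Definition tprod A B C e : R := prefix_prod A e.1.1 * prefix_prod B e.1.2 * prefix_prod C e.2.

Definition prod_ideal A B C (U3 U2 U1 : nat -> nat -> Prop) :=
  ideal_gen (fun q => exists e, vanishing_deg U3 U2 U1 e /\ q = tprod A B C e).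

Definition prod_ideal2 B C (U1 : nat -> nat -> Prop) :=
  ideal_gen (fun q => exists b c, ~ U1 b.+1 c.+1 /\ q = prefix_prod B b * prefix_prod C c).

End ProductIdeal.

Section TwoFamilies.
Variable K : fieldType.
Local Notation R := {mpoly K[6]}.
Implicit Types (B C : nat -> R).

Lemma prod_ideal2_step d2 d3 B C U1 :
  distinct_forms B d2.+1 (0, 1, 0)%N -> distinct_forms C d3 (0, 0, 1)%N ->
  ferrers U1 d2.+1 d3 ->
  (forall q, I_X1 (fun j => B (j + 1)%N) C (rel_shift U1 1 0) q ->
     prod_ideal2 (fun j => B (j + 1)%N) C (rel_shift U1 1 0) q) ->
  forall p, I_X1 B C U1 p -> prod_ideal2 B C U1 p.
Proof.
move=> hB hC hU1 IH p hp; have B1 : (0 < 1 <= d2.+1)%N by [].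
have linB := distinct_forms_lin2 hB; have linC := distinct_forms_lin3 hC.
have [σ [kσ σu _]] := lin_form_killer (isT : i2 != i3) (linB _ B1).
have σC k : (0 < k <= d3)%N -> comp_mpoly σ (C k) = C k.
  by move=> hk; apply: comp_lin_form_id (linC _ hk); apply: σu.
have hr k : U1 1%N k -> divides (C k) (comp_mpoly σ p).
  by move=> U1k; have [_ hk] := hU1.1 _ _ U1k; exact: kills_line_ideal kσ (σC _ hk) (hp _ _ U1k).
have /dividesP[q pE] := kσ.2 p.
rewrite -(subrK (comp_mpoly σ p) p) pE; apply: ideal_genD.
  apply: (ideal_gen_mulr _ (IH q _)) => [_ [b [c [nU ->]]]|j k [j0 k0 U1jk]].
    apply: mem_ideal_gen; exists b.+1, c; split; last by rewrite prefix_prodS; ring.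
    by move=> U1bc; apply: nU; split; rewrite ?addn1 ?addn0.
  rewrite addn0 in U1jk; have [hj hk] := hU1.1 _ _ U1jk.
  have qB1 : line_ideal (B (j + 1)%N) (C k) (q * B 1%N).
    rewrite -pE; apply: ideal_genB; first exact: hp.
    by apply/divides_line_ideal/hr; apply: hU1.2 U1jk _ _; lia.
  apply: (line_ideal_cancel _ (linB _ hj) (linC _ hk) _ qB1) => //.
  by apply: (distinct_not_line_ideal _ hB linB (linC _ hk)) => //; lia.
have [μ [μd3 hμ]] := ferrers_row 1 hU1.
have /dividesP[s ->] : divides (prefix_prod C μ) (comp_mpoly σ p).
  by apply: (prefix_prod_divides _ hC linC μd3) => // k hk; apply/hr/hμ; lia.
apply/ideal_genMl/mem_ideal_gen; exists 0%N, μ; rewrite prefix_prod0 mul1r.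
by split=> // /hμ; lia.
Qed.

Lemma I_X1_prod_ideal2 d2 d3 B C U1 :
  distinct_forms B d2 (0, 1, 0)%N -> distinct_forms C d3 (0, 0, 1)%N -> ferrers U1 d2 d3 ->
  forall p, I_X1 B C U1 p -> prod_ideal2 B C U1 p.
Proof.
move=> + hC; elim: d2 B U1 => [|d2 IH] B U1 hB hU1; last first.
  apply: (prod_ideal2_step hB hC hU1); apply: IH.
    by have := distinct_forms_shift hB (isT : 1 <= d2.+1)%N; rewrite subn1.
  by have := ferrers_shift 1 0 hU1; rewrite subn1 subn0.
move=> p _; have nU1 : ~ U1 1%N 1%N by move/(hU1.1) => [].
rewrite -[p]mulr1; apply/ideal_genMl/mem_ideal_gen.
by exists 0%N, 0%N; rewrite !prefix_prod0 mulr1.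
Qed.

End TwoFamilies.

Section ThreeFamilies.
Variable K : fieldType.
Local Notation R := {mpoly K[6]}.
Implicit Types (A : nat -> R) (p q r : R).

Variables (d2 d3 : nat) (B C : nat -> R) (U1 : nat -> nat -> Prop).
Hypotheses (hB : distinct_forms B d2 (0, 1, 0)%N) (hC : distinct_forms C d3 (0, 0, 1)%N).
Hypothesis hU1 : ferrers U1 d2 d3.

(* For [r] free of the variable eliminated by [A_1 = 0], vanishing on [X] amounts to these
   conditions: the lines through [A_1 = 0] impose divisibility by [B_j] and [C_k]. *)
Definition I_X_on_A1 (U3 U2 : nat -> nat -> Prop) r :=
  [/\ forall j, U3 1%N j -> divides (B j) r, forall k, U2 1%N k -> divides (C k) r &
      forall j k, U1 j k -> line_ideal (B j) (C k) r].

Lemma I_X1_cofactor λ μ r t : (λ <= d2)%N -> (μ <= d3)%N ->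
  (forall j k, U1 j k -> line_ideal (B j) (C k) r) ->
  r = prefix_prod B λ * (prefix_prod C μ * t) ->
  I_X1 (fun j => B (j + λ)%N) (fun k => C (k + μ)%N) (rel_shift U1 λ μ) t.
Proof.
move=> λd2 μd3 rBC rE j k [j0 k0 U1jk]; have [hj hk] := hU1.1 _ _ U1jk.
have linB := distinct_forms_lin2 hB; have linC := distinct_forms_lin3 hC.
have BC_prime := line_ideal_prime (isT : uniq [:: i2; i3; i4; i5]) (linB _ hj) (linC _ hk).
have nB i : (0 < i <= λ)%N -> ~ line_ideal (B (j + λ)%N) (C (k + μ)%N) (B i).
  by move=> hi; apply: (distinct_not_line_ideal _ hB linB (linC _ hk)) => //; lia.
have nC i : (0 < i <= μ)%N -> ~ line_ideal (B (j + λ)%N) (C (k + μ)%N) (C i).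
  move=> hi /line_idealC.
  by apply: (distinct_not_line_ideal _ hC linC (linB _ hj)) => //; lia.
have := rBC _ _ U1jk; rewrite rE.
by move=> /(prime_cancel_prefix_prod BC_prime nB) /(prime_cancel_prefix_prod BC_prime nC).
Qed.

Lemma I_X_on_A1_prod_ideal d1 A U3 U2 r : ferrers U3 d1 d2 -> ferrers U2 d1 d3 ->
  I_X_on_A1 U3 U2 r -> prod_ideal A B C U3 U2 U1 r.
Proof.
move=> hU3 hU2 [rB rC rBC].
have linB := distinct_forms_lin2 hB; have linC := distinct_forms_lin3 hC.
have [λ [λd2 hλ]] := ferrers_row 1 hU3; have [μ [μd3 hμ]] := ferrers_row 1 hU2.
have /dividesP[s rE] : divides (prefix_prod B λ) r.
  by apply: (prefix_prod_divides _ hB linB λd2) => // j hj; apply/rB/hλ; lia.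
have /dividesP[t sE] : divides (prefix_prod C μ) s.
  apply: (prefix_prod_divides _ hC linC μd3) => // k hk.
  have Ck : (0 < k <= d3)%N by lia.
  have nCB j : (0 < j <= λ)%N -> ~ divides (C k) (B j).
    move=> hj; have Bj : (0 < j <= d2)%N by lia.
    exact: (not_divides_disjoint _ (linC _ Ck) _ _ (linB _ Bj)).
  have : divides (C k) (prefix_prod B λ * s) by rewrite mulrC -rE; apply/rC/hμ; lia.
  exact/(prime_cancel_prefix_prod (divides_lin_prime _ (linC _ Ck)) nCB).
have rE' : r = prefix_prod B λ * (prefix_prod C μ * t) by rewrite rE sE; ring.
have := I_X1_prod_ideal2 (distinct_forms_shift hB λd2) (distinct_forms_shift hC μd3)
  (ferrers_shift λ μ hU1) (I_X1_cofactor λd2 μd3 rBC rE').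
rewrite rE' mulrA mulrC.
apply: ideal_gen_mulr => _ [b [c [nU ->]]]; apply: mem_ideal_gen.
exists (0, λ + b, μ + c)%N; split; last by rewrite /tprod /= !prefix_prodD prefix_prod0; ring.
split=> /=; [move/(hλ _ (ltn0Sn _)) | move/(hμ _ (ltn0Sn _)) | move=> U1bc]; try lia.
by apply: nU; split; rewrite // !addSn [(b + λ)%N]addnC [(c + μ)%N]addnC.
Qed.

Lemma I_X_quotient d1 A U3 U2 p q r : distinct_forms A d1.+1 (1, 0, 0)%N ->
  ferrers U3 d1.+1 d2 -> ferrers U2 d1.+1 d3 -> I_X A B C U3 U2 U1 p ->
  I_X_on_A1 U3 U2 r -> p - r = q * A 1%N ->
  I_X (fun i => A (i + 1)%N) B C (rel_shift U3 1 0) (rel_shift U2 1 0) U1 q.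
Proof.
move=> hA hU3 hU2 [p3 [p2 p1]] [rB rC rBC] pE; have A1 : (0 < 1 <= d1.+1)%N by [].
have linA := distinct_forms_lin1 hA.
have linB := distinct_forms_lin2 hB; have linC := distinct_forms_lin3 hC.
have qA M N : line_ideal M N p -> line_ideal M N r -> line_ideal M N (q * A 1%N).
  by move=> pMN rMN; rewrite -pE; exact: ideal_genB.
split; [|split].
- move=> i j [i0 j0]; rewrite addn0 => U3ij; have [hi hj] := hU3.1 _ _ U3ij.
  have rBj : line_ideal (A (i + 1)%N) (B j) r.
    by apply/divides_line_ideal/rB; apply: hU3.2 U3ij _ _; lia.
  apply: (line_ideal_cancel _ (linA _ hi) (linB _ hj) _
    (qA _ _ (p3 _ _ U3ij) rBj)) => //.
  by apply: (distinct_not_line_ideal _ hA linA (linB _ hj)) => //; lia.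
- move=> i k [i0 k0]; rewrite addn0 => U2ik; have [hi hk] := hU2.1 _ _ U2ik.
  have rCk : line_ideal (A (i + 1)%N) (C k) r.
    by apply/divides_line_ideal/rC; apply: hU2.2 U2ik _ _; lia.
  apply: (line_ideal_cancel _ (linA _ hi) (linC _ hk) _
    (qA _ _ (p2 _ _ U2ik) rCk)) => //.
  by apply: (distinct_not_line_ideal _ hA linA (linC _ hk)) => //; lia.
- move=> j k U1jk; have [hj hk] := hU1.1 _ _ U1jk.
  apply: (line_ideal_cancel _ (linB _ hj) (linC _ hk) _
    (qA _ _ (p1 _ _ U1jk) (rBC _ _ U1jk))) => //.
  exact: (not_line_ideal_disjoint _ (linB _ hj) (linC _ hk) _ _ (linA _ A1)).
Qed.

Lemma prod_ideal_step d1 A U3 U2 : distinct_forms A d1.+1 (1, 0, 0)%N ->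
  ferrers U3 d1.+1 d2 -> ferrers U2 d1.+1 d3 ->
  (forall q, I_X (fun i => A (i + 1)%N) B C (rel_shift U3 1 0) (rel_shift U2 1 0) U1 q ->
     prod_ideal (fun i => A (i + 1)%N) B C (rel_shift U3 1 0) (rel_shift U2 1 0) U1 q) ->
  forall p, I_X A B C U3 U2 U1 p -> prod_ideal A B C U3 U2 U1 p.
Proof.
move=> hA hU3 hU2 IH p hp; have A1 : (0 < 1 <= d1.+1)%N by [].
have linB := distinct_forms_lin2 hB; have linC := distinct_forms_lin3 hC.
have linA := distinct_forms_lin1 hA.
have [σ [kσ σu _]] := lin_form_killer (isT : i0 != i1) (linA _ A1).
have σB j : (0 < j <= d2)%N -> comp_mpoly σ (B j) = B j.
  by move=> hj; apply: comp_lin_form_id (linB _ hj); apply: σu.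
have σC k : (0 < k <= d3)%N -> comp_mpoly σ (C k) = C k.
  by move=> hk; apply: comp_lin_form_id (linC _ hk); apply: σu.
have hr : I_X_on_A1 U3 U2 (comp_mpoly σ p).
  split=> [j U3j|k U2k|j k U1jk].
  - have [_ hj] := hU3.1 _ _ U3j; exact: kills_line_ideal kσ (σB _ hj) (hp.1 _ _ U3j).
  - have [_ hk] := hU2.1 _ _ U2k; exact: kills_line_ideal kσ (σC _ hk) (hp.2.1 _ _ U2k).
  - have [hj hk] := hU1.1 _ _ U1jk; exact: comp_line_ideal (σB _ hj) (σC _ hk) (hp.2.2 _ _ U1jk).
have /dividesP[q pE] := kσ.2 p.
rewrite -(subrK (comp_mpoly σ p) p) pE.
apply: ideal_genD; last exact: I_X_on_A1_prod_ideal hU3 hU2 hr.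
apply: (ideal_gen_mulr _ (IH q (I_X_quotient hA hU3 hU2 hp hr pE))).
move=> _ [[[a b] c] [[/= nU3 nU2 nU1] ->]]; apply: mem_ideal_gen.
exists (a.+1, b, c); split; last by rewrite /tprod /= prefix_prodS; ring.
by split=> /= [U3ab|U2ac|//]; [apply: nU3 | apply: nU2]; split; rewrite ?addn1 ?addn0.
Qed.

Lemma I_X_prod_ideal d1 A U3 U2 : distinct_forms A d1 (1, 0, 0)%N ->
  ferrers U3 d1 d2 -> ferrers U2 d1 d3 ->
  forall p, I_X A B C U3 U2 U1 p -> prod_ideal A B C U3 U2 U1 p.
Proof.
elim: d1 A U3 U2 => [|d1 IH] A U3 U2 hA hU3 hU2; last first.
  apply: (prod_ideal_step hA hU3 hU2); apply: IH.
  - by have := distinct_forms_shift hA (isT : 1 <= d1.+1)%N; rewrite subn1.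
  - by have := ferrers_shift 1 0 hU3; rewrite subn1 subn0.
  - by have := ferrers_shift 1 0 hU2; rewrite subn1 subn0.
move=> p [_ [_ /(I_X1_prod_ideal2 hB hC hU1)]].
apply: ideal_gen_mono => _ [b [c [nU1 ->]]]; exists (0, b, c)%N.
split; last by rewrite /tprod /= prefix_prod0 mul1r.
by split=> // [/hU3.1|/hU2.1] [].
Qed.

End ThreeFamilies.

Section TripleOrder.
Implicit Types (D N : nat * nat * nat -> Prop) (c d e f g : nat * nat * nat).

Definition addt d e : nat * nat * nat := (d.1.1 + e.1.1, d.1.2 + e.1.2, d.2 + e.2)%N.

Lemma le3_refl e : le3 e e.
Proof. by rewrite /le3 !leqnn. Qed.

Lemma le3_trans c d e : le3 c d -> le3 d e -> le3 c e.
Proof. by rewrite /le3; lia. Qed.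

Lemma le3_anti d e : le3 d e -> le3 e d -> d = e.
Proof. by case: d e => [[? ?] ?] [[? ?] ?]; rewrite /le3 /= => ? ?; congr (_, _, _); lia. Qed.

Lemma le3_addt d e : le3 e (addt d e).
Proof. by rewrite /le3 /addt /=; lia. Qed.

Definition minimal N e := N e /\ forall f, N f -> le3 f e -> f = e.

Lemma exists_minimal_le N e : N e -> exists2 m, minimal N m & le3 m e.
Proof.
move: {2}(e.1.1 + e.1.2 + e.2)%N (erefl (e.1.1 + e.1.2 + e.2)%N) => n.
elim/ltn_ind: n e => n IH e en Ne.
case: (classic (exists2 f, N f & le3 f e /\ f <> e)) => [[f Nf [fe nfe]]|nobelow].
  have [|m mmin mf] := IH _ _ f erefl Nf; last by exists m; last exact: le3_trans mf fe.
  move: fe nfe; rewrite -en; case: e f {IH en Ne Nf} => [[a b] c] [[a' b'] c'] [/= ? [? ?]].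
  by move/eqP; rewrite !xpair_eqE; lia.
exists e; last exact: le3_refl.
by split=> // f Nf fe; apply: NNPP => nfe; apply: nobelow; exists f.
Qed.

Lemma minimal_cofinal D N : (forall e, D e -> N e) ->
  (forall e, N e -> exists2 f, D f & le3 f e) -> forall e, minimal D e <-> minimal N e.
Proof.
move=> DN cof e; split=> [[De minD]|[Ne minN]].
  split=> [|f Nf fe]; first exact: DN.
  have [g Dg gf] := cof f Nf; have ge := minD g Dg (le3_trans gf fe); subst g.
  exact: le3_anti.
have [g Dg ge] := cof e Ne; have eg := minN g (DN g Dg) ge; subst g.
by split=> // f Df; exact: minN (DN f Df).
Qed.

End TripleOrder.

Section TriDegree.
Variable K : comNzRingType.
Local Notation R := {mpoly K[6]}.
Implicit Types (p q f g h : R) (F : nat -> R) (c d e : nat * nat * nat).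



Lemma tdegD (m1 m2 : 'X_{1..6}) : tdeg (m1 + m2)%MM = addt (tdeg m1) (tdeg m2).
Proof. by rewrite /tdeg /addt /= !mnmDE; congr (_, _, _); exact: addnACA. Qed.

Lemma thomogM f g d e : thomog f d -> thomog g e -> thomog (f * g) (addt d e).
Proof.
move=> hf hg m /msuppM_le /allpairsP[[m1 m2] /= [m1f m2g ->]].
by rewrite tdegD hf // hg.
Qed.

Lemma thomogX (m : 'X_{1..6}) : thomog ('X_[m] : R) (tdeg m).
Proof. by move=> m' /mem_msuppXP <-. Qed.

Lemma thomog_prefix_prod F a x y z : (forall i, (0 < i <= a)%N -> thomog (F i) (x, y, z)) ->
  thomog (prefix_prod F a) (a * x, a * y, a * z)%N.
Proof.
elim: a => [|a IH] hF.
  by rewrite prefix_prod0 !mul0n => m; rewrite -mpolyC1 msupp1 inE => /eqP ->; rewrite /tdeg !mnm0E.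
have hFa : thomog (F a.+1) (x, y, z) by apply: hF; rewrite leqnn.
have IHa : thomog (prefix_prod F a) (a * x, a * y, a * z)%N.
  by apply: IH => i hi; apply: hF; lia.
by have := thomogM IHa hFa; rewrite prefix_prodSr /addt /= -!mulSnr.
Qed.

Lemma thomog_uniq g d e : g != 0 -> thomog g d -> thomog g e -> d = e.
Proof.
move=> nzg hd he; case E: (msupp g) => [|m s]; first by move: nzg; rewrite [g]mpolyE E big_nil eqxx.
have gm : m \in msupp g by rewrite E mem_head.
by rewrite -(hd m gm) (he m gm).
Qed.

Definition tcomp d p := \sum_(m <- msupp p | tdeg m == d) p@_m *: 'X_[m].

Lemma tcompE d p k : (tcomp d p)@_k = if tdeg k == d then p@_k else 0.
Proof.
rewrite /tcomp raddf_sum /= big_mkcond /=; case: (boolP (k \in msupp p)) => kp.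
  rewrite (bigD1_seq k) ?msupp_uniq //= big1 ?addr0 => [|m mk].
    by case: ifP; rewrite ?mcoeffZ ?mcoeffX ?eqxx ?mulr1.
  by case: ifP; rewrite ?mcoeffZ ?mcoeffX ?(negbTE mk) ?mulr0.
rewrite memN_msupp_eq0 // if_same big1_seq // => m /andP[_ mp].
case: ifP => // _; rewrite mcoeffZ mcoeffX.
by case: eqP => [mk|]; [move: kp; rewrite -mk mp | rewrite mulr0].
Qed.

Lemma tcomp_sum d (I : Type) (s : seq I) (G : I -> R) :
  tcomp d (\sum_(i <- s) G i) = \sum_(i <- s) tcomp d (G i).
Proof.
apply/mpolyP => k; rewrite tcompE !raddf_sum /=.
by case: ifP => dk; [apply: eq_bigr => i _ | rewrite big1 // => i _]; rewrite tcompE dk.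
Qed.

Lemma tcompZ d (a : K) p : tcomp d (a *: p) = a *: tcomp d p.
Proof.
by apply/mpolyP => k; rewrite mcoeffZ !tcompE mcoeffZ; case: ifP; rewrite ?mulr0.
Qed.

Lemma tcomp_homog d e h : thomog h e -> tcomp d h = if e == d then h else 0.
Proof.
move=> he; apply/mpolyP => k; rewrite tcompE; case: (boolP (k \in msupp h)) => kh.
  by rewrite (he _ kh); case: ifP; rewrite ?mcoeff0.
by rewrite memN_msupp_eq0 //; do 2!case: ifP; rewrite ?mcoeff0 ?memN_msupp_eq0.
Qed.

Lemma tcomp_id d h : thomog h d -> tcomp d h = h.
Proof. by move/(tcomp_homog d); rewrite eqxx. Qed.

Lemma tcompMr d e q f : thomog f e ->
  exists q', tcomp d (q * f) = q' * f /\ (~ le3 e d -> q' = 0).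
Proof.
move=> hf; exists (\sum_(m <- msupp q) q@_m *: (if addt (tdeg m) e == d then 'X_[m] else 0)).
split.
  rewrite {1}[q]mpolyE !mulr_suml tcomp_sum; apply: eq_bigr => m _.
  rewrite -!scalerAl tcompZ (tcomp_homog d (thomogM (thomogX (m := m)) hf)); congr (_ *: _).
  by case: ifP; rewrite ?mul0r.
move=> nle; apply: big1 => m _; case: eqP => [edm|]; last by rewrite scaler0.
by case: nle; rewrite -edm; exact: le3_addt.
Qed.

Lemma ideal_gen_tcomp (S : R -> Prop) d p : (forall s, S s -> exists e, thomog s e) ->
  ideal_gen S p -> ideal_gen (fun s => S s /\ exists e, thomog s e /\ le3 e d) (tcomp d p).
Proof.
move=> hS [l [hl ->]]; rewrite tcomp_sum; apply: ideal_gen_sum => -[q s] /hl /= Ss.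
have [e se] := hS s Ss; have [q' [-> q'0]] := tcompMr d q se.
case: (classic (le3 e d)) => [le|nle]; last by rewrite q'0 // mul0r; exact: ideal_gen0.
by apply/ideal_genMl/mem_ideal_gen; split=> //; exists e.
Qed.

End TriDegree.

Section MinimalGenerators.
Variable K : comNzRingType.
Local Notation R := {mpoly K[6]}.
Implicit Types (I S G : R -> Prop) (p g : R) (d e : nat * nat * nat).

Lemma generates_ext S S' I : (forall p, S p <-> S' p) -> generates S' I -> generates S I.
Proof. by move=> SS' hg p; rewrite hg; split; apply: ideal_gen_mono => s /SS'. Qed.

Lemma min_generates_ext S S' I : (forall p, S p <-> S' p) ->
  min_generates S' I -> min_generates S I.
Proof.
move=> SS' [hg hmin]; split; first exact: generates_ext hg.
move=> s /SS' S's hs; apply: (hmin s S's); apply: ideal_gen_mono hs => q [/SS' S'q qs].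
by [].
Qed.

Lemma Dset_ext I I' d : (forall p, I p <-> I' p) -> Dset I d -> Dset I' d.
Proof.
move=> II' [G [[[hG hGmin] hGh] hd]]; exists G; split=> //; split=> //; split=> // p.
by rewrite -II'.
Qed.

(* Graded Nakayama: otherwise, taking tridegree components, [g] would lie in the ideal of the
   elements of [G] of smaller tridegree. *)
Lemma min_hom_generates_deg I F G g d : generates F I -> (forall f, F f -> exists e, thomog f e) ->
  min_hom_generates G I -> G g -> g != 0 -> thomog g d -> exists f, F f /\ f != 0 /\ thomog f d.
Proof.
move=> hF hFh [[hG hGmin] hGh] Gg nzg gd; apply: NNPP => noFd; apply: (hGmin g Gg).
have /(ideal_gen_tcomp d hFh) : ideal_gen F g by apply/hF/hG/mem_ideal_gen.
rewrite tcomp_id //; apply: ideal_gen_trans => f [Ff [e [fe ed]]].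
have [->|nzf] := eqVneq f 0; first exact: ideal_gen0.
have /(ideal_gen_tcomp e hGh) : ideal_gen G f by apply/hG/hF/mem_ideal_gen.
rewrite tcomp_id //; apply: ideal_gen_mono => s [Gs [e' [se' e'e]]]; split=> // sg.
move: se'; rewrite sg => /(thomog_uniq nzg gd) de'; subst e'.
by apply: noFd; exists f; rewrite (le3_anti e'e ed).
Qed.

Lemma Dset_min_hom_generates I F d : min_hom_generates F I ->
  Dset I d <-> exists f, F f /\ f != 0 /\ thomog f d.
Proof.
move=> hF; split=> [[G [hG [g [Gg [nzg gd]]]]]|[f [Ff fd]]]; last by exists F; split=> //; exists f.
exact: min_hom_generates_deg hF.1.1 hF.2 hG Gg nzg gd.
Qed.

(* Taking tridegree-[e] components kills every generator other than [P e]. *)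
Lemma antichain_min_generates (T : nat * nat * nat -> Prop) (P : nat * nat * nat -> R) I :
  (forall e, T e -> thomog (P e) e /\ P e != 0) -> (forall e f, T e -> T f -> le3 f e -> f = e) ->
  generates (fun p => exists e, T e /\ p = P e) I ->
  min_generates (fun p => exists e, T e /\ p = P e) I.
Proof.
move=> hP anti hg; split=> // _ [e [Te ->]] hPe; have [Pe nzPe] := hP e Te.
have hS s : (exists f, T f /\ s = P f) /\ s <> P e -> exists e', thomog s e'.
  by move=> [[f [Tf ->]] _]; exists f; exact: (hP f Tf).1.
have := ideal_gen_tcomp e hS hPe; rewrite tcomp_id // => hPe'.
move/eqP: nzPe; apply; apply: (ideal_gen_eq0 _ hPe').
move=> _ [[[f [Tf ->]] fe] [e' [Pfe' e'e]]].
have [Pf nzPf] := hP f Tf; have fe' := thomog_uniq nzPf Pf Pfe'; subst e'.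
by case: fe; rewrite (anti e f Te Tf e'e).
Qed.

End MinimalGenerators.

Section ProductsInI_X.
Variable K : comNzRingType.
Local Notation R := {mpoly K[6]}.
Implicit Types (A B C F G : nat -> R).

Lemma prefix_prod2_line_ideal F G U n1 n2 a b i j : ferrers U n1 n2 -> ~ U a.+1 b.+1 ->
  U i j -> line_ideal (F i) (G j) (prefix_prod F a * prefix_prod G b).
Proof.
move=> hU nU Uij; have [hi hj] := hU.1 _ _ Uij.
case: (leqP i a) => ia.
  by apply/ideal_genMr/line_idealC/divides_line_ideal/divides_prefix_prod; lia.
case: (leqP j b) => jb; first by apply/ideal_genMl/divides_line_ideal/divides_prefix_prod; lia.
by case: nU; apply: hU.2 Uij _ _; lia.
Qed.

Lemma prod_ideal_I_X A B C U3 U2 U1 n1 n2 n3 :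
  ferrers U3 n1 n2 -> ferrers U2 n1 n3 -> ferrers U1 n2 n3 ->
  forall p, prod_ideal A B C U3 U2 U1 p -> I_X A B C U3 U2 U1 p.
Proof.
move=> hU3 hU2 hU1 p hp; split; [|split] => i j Uij; apply: ideal_gen_trans hp.
all: move=> _ [[[a b] c] [[/= nU3 nU2 nU1] ->]]; rewrite /tprod /=.
- exact/ideal_genMr/(prefix_prod2_line_ideal _ _ hU3).
- by rewrite mulrAC; exact/ideal_genMr/(prefix_prod2_line_ideal _ _ hU2).
- by rewrite -mulrA mulrC; exact/ideal_genMr/(prefix_prod2_line_ideal _ _ hU1).
Qed.

Lemma tprod_le A B C e f : le3 e f -> exists t, tprod A B C f = t * tprod A B C e.
Proof.
move=> [ef1 [ef2 ef3]].
have [t1 E1] := prefix_prod_le A ef1; have [t2 E2] := prefix_prod_le B ef2.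
have [t3 E3] := prefix_prod_le C ef3.
by exists (t1 * t2 * t3); rewrite /tprod E1 E2 E3; ring.
Qed.

End ProductsInI_X.

Section FerrersVariety.
Variable K : fieldType.
Local Notation R := {mpoly K[6]}.
Variables (d1 d2 d3 : nat) (A B C : nat -> R).
Hypotheses (hA : distinct_forms A d1 (1, 0, 0)%N) (hB : distinct_forms B d2 (0, 1, 0)%N)
  (hC : distinct_forms C d3 (0, 0, 1)%N).

Lemma tprod_homog e : le3 e (d1, d2, d3) -> thomog (tprod A B C e) e.
Proof.
case: e => [[a b] c] [/= ad1 [bd2 cd3]].
have := thomogM (thomogM (thomog_prefix_prod (distinct_forms_homog hA ad1))
  (thomog_prefix_prod (distinct_forms_homog hB bd2)))
  (thomog_prefix_prod (distinct_forms_homog hC cd3)).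
by rewrite /addt /= !muln1 !muln0 !addn0 !add0n.
Qed.

Lemma tprod_neq0 e : le3 e (d1, d2, d3) -> tprod A B C e != 0.
Proof.
case: e => [[a b] c] [/= ad1 [bd2 cd3]].
by rewrite /tprod !mulf_neq0 // (prefix_prod_neq0 hA, prefix_prod_neq0 hB, prefix_prod_neq0 hC).
Qed.

Section Diagrams.
Variables (U3 U2 U1 : nat -> nat -> Prop).
Hypotheses (hU3 : ferrers U3 d1 d2) (hU2 : ferrers U2 d1 d3) (hU1 : ferrers U1 d2 d3).

Lemma I_XE p : I_X A B C U3 U2 U1 p <-> prod_ideal A B C U3 U2 U1 p.
Proof.
split; first exact: (I_X_prod_ideal hB hC hU1 hA hU3 hU2).
by apply: (@prod_ideal_I_X _ A B C U3 U2 U1 _ _ _ hU3 hU2 hU1).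
Qed.

Lemma minimal_vanishing_deg_le e : minimal (vanishing_deg U3 U2 U1) e -> le3 e (d1, d2, d3).
Proof.
case: e => [[a b] c] [[/= n3 n2 n1] emin]; rewrite /le3 /=.
have [box3 _] := hU3; have [box2 _] := hU2; have [box1 _] := hU1.
split; [|split].
- case: (leqP a d1) => // ad1; suff: (a.-1, b, c) = (a, b, c) by case; lia.
  apply: emin; last by rewrite /le3 /=; lia.
  by split=> //= [/box3|/box2]; lia.
- case: (leqP b d2) => // bd2; suff: (a, b.-1, c) = (a, b, c) by case; lia.
  apply: emin; last by rewrite /le3 /=; lia.
  by split=> //= [/box3|/box1]; lia.
- case: (leqP c d3) => // cd3; suff: (a, b, c.-1) = (a, b, c) by case; lia.
  apply: emin; last by rewrite /le3 /=; lia.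
  by split=> //= [/box2|/box1]; lia.
Qed.

Definition min_tprods p := exists e, minimal (vanishing_deg U3 U2 U1) e /\ p = tprod A B C e.

Lemma min_hom_generates_tprods : min_hom_generates min_tprods (I_X A B C U3 U2 U1).
Proof.
have hP e : minimal (vanishing_deg U3 U2 U1) e -> thomog (tprod A B C e) e /\ tprod A B C e != 0.
  by move/minimal_vanishing_deg_le=> ed; split; [exact: tprod_homog | exact: tprod_neq0].
split; last by move=> _ [e [emin ->]]; exists e; exact: (hP e emin).1.
apply: antichain_min_generates => // [e f [_ emin] [Nf _]|p]; first exact: emin.
rewrite I_XE; split; last by apply: ideal_gen_mono => _ [e [[Ne _] ->]]; exists e.
apply: ideal_gen_trans => _ [e [Ne ->]]; have [m mmin me] := exists_minimal_le Ne.
by have [t ->] := tprod_le A B C me; apply/ideal_genMl/mem_ideal_gen; exists m.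
Qed.

Lemma Dset_I_X d : Dset (I_X A B C U3 U2 U1) d <-> minimal (vanishing_deg U3 U2 U1) d.
Proof.
rewrite (Dset_min_hom_generates _ min_hom_generates_tprods).
split=> [[_ [[e [emin ->]] [nze de]]]|dmin].
  by rewrite (thomog_uniq nze de (tprod_homog (minimal_vanishing_deg_le emin))).
have dd := minimal_vanishing_deg_le dmin.
by exists (tprod A B C d); split; [exists d | split; [exact: tprod_neq0 | exact: tprod_homog]].
Qed.

End Diagrams.

Lemma Dset_I_X3 U3 x : ferrers U3 d1 d2 ->
  Dset (I_X3 A B U3) x <-> minimal (vanishing_deg U3 rel0 rel0) x.
Proof.
move=> hU3; rewrite -(Dset_I_X hU3 (ferrers0 _ _) (ferrers0 _ _)).
have E p : I_X3 A B U3 p <-> I_X A B C U3 rel0 rel0 p by split=> [|[] //]; split=> //; split.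
by split; apply: Dset_ext => p; rewrite E.
Qed.

Lemma Dset_I_X2 U2 x : ferrers U2 d1 d3 ->
  Dset (I_X2 A C U2) x <-> minimal (vanishing_deg rel0 U2 rel0) x.
Proof.
move=> hU2; rewrite -(Dset_I_X (ferrers0 _ _) hU2 (ferrers0 _ _)).
have E p : I_X2 A C U2 p <-> I_X A B C rel0 U2 rel0 p by split=> [|[_ []] //]; split=> //; split.
by split; apply: Dset_ext => p; rewrite E.
Qed.

Lemma Dset_I_X1 U1 x : ferrers U1 d2 d3 ->
  Dset (I_X1 B C U1) x <-> minimal (vanishing_deg rel0 rel0 U1) x.
Proof.
move=> hU1; rewrite -(Dset_I_X (ferrers0 _ _) (ferrers0 _ _) hU1).
have E p : I_X1 B C U1 p <-> I_X A B C rel0 rel0 U1 p by split=> [|[_ []] //]; split=> //; split.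
by split; apply: Dset_ext => p; rewrite E.
Qed.

Section Variety.
Variables (U3 U2 U1 : nat -> nat -> Prop).
Hypotheses (hU3 : ferrers U3 d1 d2) (hU2 : ferrers U2 d1 d3) (hU1 : ferrers U1 d2 d3).

Lemma DX_vanishing_deg e : DX A B C U3 U2 U1 e -> vanishing_deg U3 U2 U1 e.
Proof.
move=> [a3 [b3 [a2 [c2 [b1 [c1 [D3 [D2 [D1 ->]]]]]]]]].
have [[/= n3 _ _] _] := (Dset_I_X3 _ hU3).1 D3; have [[/= _ n2 _] _] := (Dset_I_X2 _ hU2).1 D2.
have [[/= _ _ n1] _] := (Dset_I_X1 _ hU1).1 D1.
split=> /=; [apply: (ferrers_not_le hU3 n3) | apply: (ferrers_not_le hU2 n2)
  | apply: (ferrers_not_le hU1 n1)]; by rewrite ?leq_maxl ?leq_maxr.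
Qed.

Lemma vanishing_deg_DX e : vanishing_deg U3 U2 U1 e -> exists2 f, DX A B C U3 U2 U1 f & le3 f e.
Proof.
case: e => [[a b] c] [/= n3 n2 n1].
have [[[a3 b3] z3] m3 [/= a3a [b3b]]] :=
  exists_minimal_le (N := vanishing_deg U3 rel0 rel0) (e := (a, b, 0%N)) (And3 n3 id id).
have [[[a2 y2] c2] m2 [/= a2a [y2b c2c]]] :=
  exists_minimal_le (N := vanishing_deg rel0 U2 rel0) (e := (a, 0%N, c)) (And3 id n2 id).
have [[[x1 b1] c1] m1 [/= x1a [b1b c1c]]] :=
  exists_minimal_le (N := vanishing_deg rel0 rel0 U1) (e := (0%N, b, c)) (And3 id id n1).
rewrite !leqn0 => /eqP z30; move: y2b x1a; rewrite !leqn0 => /eqP y20 /eqP x10.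
subst z3 y2 x1; exists (maxn a3 a2, maxn b3 b1, maxn c1 c2).
  exists a3, b3, a2, c2, b1, c1; split; first exact/(Dset_I_X3 _ hU3).
  by split; [exact/(Dset_I_X2 _ hU2) | split; first exact/(Dset_I_X1 _ hU1)].
by rewrite /le3 /= !geq_max a3a a2a b3b b1b c1c c2c.
Qed.

Lemma DhatX_minimal e : DhatX A B C U3 U2 U1 e <-> minimal (vanishing_deg U3 U2 U1) e.
Proof. exact: minimal_cofinal DX_vanishing_deg vanishing_deg_DX e. Qed.

End Variety.

End FerrersVariety.

Unset Implicit Arguments.

Theorem theorem4p3 (K : closedFieldType) (charK0 : [pchar K] =i pred0)
  (d1 d2 d3 : nat) (A B C : nat -> {mpoly K[6]})
  (U3 U2 U1 : nat -> nat -> Prop)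
  (hA : distinct_forms A d1 (1, 0, 0)%N)
  (hB : distinct_forms B d2 (0, 1, 0)%N)
  (hC : distinct_forms C d3 (0, 0, 1)%N)
  (hU3 : ferrers U3 d1 d2) (hU2 : ferrers U2 d1 d3) (hU1 : ferrers U1 d2 d3)
  (hAused : forall i, (1 <= i <= d1)%N -> (exists j, U3 i j) \/ (exists k, U2 i k))
  (hBused : forall j, (1 <= j <= d2)%N -> (exists i, U3 i j) \/ (exists k, U1 j k))
  (hCused : forall k, (1 <= k <= d3)%N -> (exists i, U2 i k) \/ (exists j, U1 j k)) :
  min_generates
    (fun p => exists a b c, DhatX A B C U3 U2 U1 (a, b, c) /\
       p = (\prod_(1 <= i < a.+1) A i) * (\prod_(1 <= j < b.+1) B j)
           * (\prod_(1 <= k < c.+1) C k))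
    (I_X A B C U3 U2 U1).
Proof.
(* The argument works over any field. *)
apply: (min_generates_ext _ (min_hom_generates_tprods hA hB hC hU3 hU2 hU1).1) => p.
split=> [[a [b [c [hD ->]]]]|[[[a b] c] [hm ->]]].
  by exists (a, b, c); split=> //; exact/(DhatX_minimal hA hB hC hU3 hU2 hU1).
by exists a, b, c; split=> //; exact/(DhatX_minimal hA hB hC hU3 hU2 hU1).
Qed.
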